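(* Let $C,D$ be sets and let $\bot:=CD\mathcal y$ be the $(C\mathcal y,D\mathcal y)$-bicomodule corresponding to the terminal span $C\leftarrow C\times D\to D$. The operation $m\mapsto m^\vee:=[m,\bot]_{C\mathcal y,D\mathcal y}$ restricts to mutually inverse equivalences between the category of conjunctive $(C\mathcal y,D\mathcal y)$-bicomodules and the opposite of the category of linear $(C\mathcal y,D\mathcal y)$-bicomodules. Explicitly, for a span $C\leftarrow M\to D$ with fibers $M_a$ over $a\in C$ (each a set over $D$), $$\Big(\sum_{a\in C}M_a\mathcal y\Big)^\vee\cong\sum_{a\in C}\mathcal y^{M_a}\qquad\text{and}\qquad\Big(\sum_{a\in C}\mathcal y^{M_a}\Big)^\vee\cong\sum_{a\in C}M_a\mathcal y.$$
   Context: Bicomodules between discrete categories $C\mathcal y,D\mathcal y$ (comonoids in $(\mathbf{Poly},\mathcal y,\triangleleft)$ with linear carrier) are polynomials $m$ with compatible coactions; a linear one $M\mathcal y$ is a span $C\leftarrow M\to D$ (corresponding prafunctor $\Sigma\Delta$), a conjunctive one has exactly one position over each $a\in C$, i.e. is $\sum_{a\in C}\mathcal y^{m[a]}$ with each $m[a]$ a set over $D$ (corresponding prafunctor $\Pi\Delta$). For such bicomodules $q,r$, the local internal hom is $[q,r]_{C\mathcal y,D\mathcal y}:=\sum_{a\in C}\sum_{\varphi\in\mathbf{Set}[D](q_a,r_a)}\mathcal y^{\sum_{j\in q_a(1)}r[\varphi(j)]}$, where $q_a$ is the summand over $a$, $\mathbf{Set}[D](q_a,r_a)$ is the set of natural transformations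 between the associated functors $D\text{-}\mathbf{Set}\to\mathbf{Set}$, $X\mapsto\sum_{j\in q_a(1)}D\text{-}\mathbf{Set}(q[j],X)$, and $\varphi(j)$ is the image position. It is contravariant in $q$. *)

Set Implicit Arguments.

Section Bicomod.
Variables C D : Type.

(* A (Cy,Dy)-bicomodule between discrete categories: a polynomial
   m = sum_{i in pos} y^{dir i}, whose positions lie over C (left coaction)
   and whose directions lie over D (right coaction). *)
Record bicomod := Bicomod {
  pos : Type;
  base : pos -> C;
  dir : pos -> Type;
  dlab : forall i, dir i -> D }.

Record hom (m n : bicomod) := Hom {
  on_pos : pos m -> pos n;
  on_base : forall i, base n (on_pos i) = base m i;
  on_dir : forall i, dir n (on_pos i) -> dir m i;
  on_lab : forall i e, dlab m i (on_dir i e) = dlab n (on_pos i) e }.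

Definition hom_eq (m n : bicomod) (f g : hom m n) : Prop :=
  exists p : forall i, on_pos f i = on_pos g i,
    forall i (e : dir n (on_pos f i)),
      on_dir f i e = on_dir g i (eq_rect _ (dir n) e _ (p i)).

Definition idh (m : bicomod) : hom m m :=
  @Hom m m (fun i => i) (fun i => eq_refl) (fun i e => e) (fun i e => eq_refl).

Definition comp (m n p : bicomod) (g : hom n p) (f : hom m n) : hom m p :=
  @Hom m p (fun i => on_pos g (on_pos f i))
    (fun i => eq_trans (on_base g (on_pos f i)) (on_base f i))
    (fun i e => on_dir f i (on_dir g (on_pos f i) e))
    (fun i e => eq_trans (on_lab f i _) (on_lab g (on_pos f i) e)).

Definition iso (m n : bicomod) : Prop :=
  exists (f : hom m n) (g : hom n m),
    hom_eq (comp g f) (idh m) /\ hom_eq (comp f g) (idh n).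

(* linear: every position has exactly one direction (m = My, a span C <- M -> D) *)
Definition linear (m : bicomod) : Prop :=
  forall i, exists e : dir m i, forall e', e' = e.

Definition conjunctive (m : bicomod) : Prop :=
  forall a, exists i, base m i = a /\ forall i', base m i' = a -> i' = i.

Definition fib (m : bicomod) (a : C) := {i : pos m | base m i = a}.

Definition dmap (m n : bicomod) (i : pos m) (k : pos n) :=
  {g : dir n k -> dir m i | forall e, dlab m i (g e) = dlab n k e}.

(* natural transformations q_a => r_a between the functors
   X |-> sum_{j in q_a(1)} D-Set(q[j], X), in their Yoneda (lens) form:
   an image position phi(j) over a and a D-map r[phi(j)] -> q[j]. *)
Definition nat_tr (q r : bicomod) (a : C) :=
  forall j : fib q a, {k : fib r a & dmap q r (proj1_sig j) (proj1_sig k)}.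

Definition ihom (q r : bicomod) : bicomod :=
  @Bicomod {a : C & nat_tr q r a} (fun p => projT1 p)
    (fun p => {j : fib q (projT1 p) & dir r (proj1_sig (projT1 (projT2 p j)))})
    (fun p e => dlab r _ (projT2 e)).

Definition ihom_map (q q' r : bicomod) (f : hom q q') : hom (ihom q' r) (ihom q r).
Proof.
refine (@Hom (ihom q' r) (ihom q r)
  (fun p => existT (fun a => nat_tr q r a) (projT1 p)
     (fun j =>
        let j' := exist (fun i => base q' i = projT1 p) (on_pos f (proj1_sig j))
                    (eq_trans (on_base f (proj1_sig j)) (proj2_sig j)) in
        existT _ (projT1 (projT2 p j'))
          (exist _ (fun e => on_dir f _ (proj1_sig (projT2 (projT2 p j')) e)) _)))
  (fun p => eq_refl)
  (fun p e => existT _ (exist (fun i => base q' i = projT1 p)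
                          (on_pos f (proj1_sig (projT1 e)))
                          (eq_trans (on_base f (proj1_sig (projT1 e)))
                                    (proj2_sig (projT1 e)))) (projT2 e))
  (fun p e => eq_refl)).
intro e. simpl. rewrite on_lab. apply (proj2_sig (projT2 (projT2 p j'))).
Defined.

Definition bot : bicomod :=
  @Bicomod (C * D) (fun k => fst k) (fun _ => unit) (fun k _ => snd k).

Definition dual (m : bicomod) : bicomod := ihom m bot.
Definition dualmap (m n : bicomod) (f : hom m n) : hom (dual n) (dual m) :=
  ihom_map bot f.

Definition lin_of (M : Type) (s : M -> C) (t : M -> D) : bicomod :=
  @Bicomod M s (fun _ => unit) (fun x _ => t x).

Definition conj_of (M : Type) (s : M -> C) (t : M -> D) : bicomod :=
  @Bicomod C (fun a => a) (fun a => {x : M | s x = a}) (fun a x => t (proj1_sig x)).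

End Bicomod.

From Stdlib Require Import ProofIrrelevance FunctionalExtensionality.
From Stdlib Require Import Classical IndefiniteDescription.

(* A position of m^vee over a is a natural transformation m_a => bot_a; since bot_a = D y has a
   single direction at each position, labelled by that position, it amounts to a choice of a
   direction of m at every position over a, and the directions of m^vee there are the positions
   of m over a.  Hence for conjunctive m (one position over a) m^vee is linear, and for linear m
   (one choice) m^vee is conjunctive.  The unit m -> m^vee^vee evaluates choice functions at a
   position.  A position of m^vee^vee over a selects a position of m from every choice function;
   by a diagonal argument some selected index i is hit by a choice function with any prescribed
   value at i, and sending the position to such an i gives the counit.  When m is conjunctive or
   linear the selection is constant, which makes unit and counit mutually inverse. *)

Set Implicit Arguments.

Lemma selection_good_index (J : Type) (X : J -> Type) (select : (forall j, X j) -> J) :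
  exists i, forall e : X i, exists F, F i = e /\ select F = i.
Proof.
apply NNPP. intro no_good.
assert (bad : forall i, exists e : X i, forall F, F i = e -> select F <> i).
{ intro i. apply NNPP. intro no_bad. apply no_good. exists i. intro e.
  apply NNPP. intro no_F. apply no_bad. exists e. intros F Fi sel.
  apply no_F. exists F. split; assumption. }
pose (F := fun i => proj1_sig (constructive_indefinite_description _ (bad i))).
exact (proj2_sig (constructive_indefinite_description _ (bad (select F))) F eq_refl eq_refl).
Qed.

Lemma sig_eq_proj1 (A : Type) (P : A -> Prop) (x y : sig P) :
  proj1_sig x = proj1_sig y -> x = y.
Proof. apply eq_sig_hprop. intros. apply proof_irrelevance. Qed.

Section Duality.
Variables C D : Type.

Definition nat_tr_dir (q : bicomod C D) (a : C) (phi : nat_tr q (bot C D) a) (j : fib q a) :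
  dir q (proj1_sig j) := proj1_sig (projT2 (phi j)) tt.

Definition nat_tr_of_dirs (q : bicomod C D) (a : C)
  (F : forall j : fib q a, dir q (proj1_sig j)) : nat_tr q (bot C D) a :=
  fun j => existT _ (exist (fun k : C * D => fst k = a) (a, dlab q _ (F j)) eq_refl)
     (exist _ (fun _ : unit => F j) (fun _ => eq_refl)).

Lemma nat_tr_dir_of_dirs (q : bicomod C D) (a : C)
  (F : forall j : fib q a, dir q (proj1_sig j)) (j : fib q a) :
  nat_tr_dir (nat_tr_of_dirs F) j = F j.
Proof. reflexivity. Qed.

Lemma nat_tr_bot_ext (q : bicomod C D) (a : C) (phi phi' : nat_tr q (bot C D) a) :
  (forall j, nat_tr_dir phi j = nat_tr_dir phi' j) -> phi = phi'.
Proof.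
intro H. apply functional_extensionality_dep. intro j. specialize (H j).
unfold nat_tr_dir in H.
destruct (phi j) as [[[c d] pc] [g Hg]], (phi' j) as [[[c' d'] pc'] [g' Hg']].
simpl in *. subst c c'.
assert (g = g') as <-. { apply functional_extensionality. intros []. exact H. }
pose proof (Hg tt) as <-. pose proof (Hg' tt) as E. simpl in E. subst d'.
rewrite (proof_irrelevance _ Hg Hg'). reflexivity.
Qed.

Lemma dlab_dual (q : bicomod C D) (p : pos (dual q)) (e : dir (dual q) p) :
  dlab (dual q) p e = dlab q (proj1_sig (projT1 e)) (nat_tr_dir (projT2 p) (projT1 e)).
Proof.
destruct p as [a phi], e as [j u]. simpl. unfold nat_tr_dir.
destruct (phi j) as [k [g Hg]]. symmetry. apply (Hg tt).
Qed.

Lemma nat_tr_dir_transport (q : bicomod C D) (a : C) (phi : nat_tr q (bot C D) a)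
  (j j' : fib q a) (E : proj1_sig j = proj1_sig j') :
  nat_tr_dir phi j' = eq_rect _ (dir q) (nat_tr_dir phi j) _ E.
Proof.
destruct j as [i p], j' as [i' p']. simpl in E. subst i'. simpl.
rewrite (proof_irrelevance _ p p'). reflexivity.
Qed.

Lemma nat_tr_dir_irrel (q : bicomod C D) (a : C) (phi : nat_tr q (bot C D) a) (i : pos q)
  (p p' : base q i = a) : nat_tr_dir phi (exist _ i p) = nat_tr_dir phi (exist _ i p').
Proof. rewrite (proof_irrelevance _ p p'). reflexivity. Qed.

Lemma dual_pos_eq (q : bicomod C D) (a a' : C) (E : a = a')
  (phi : nat_tr q (bot C D) a) (phi' : nat_tr q (bot C D) a') :
  (forall j : fib q a',
      nat_tr_dir phi (exist _ (proj1_sig j) (eq_trans (proj2_sig j) (eq_sym E)))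
      = nat_tr_dir phi' j) ->
  existT (fun a => nat_tr q (bot C D) a) a phi = existT _ a' phi'.
Proof.
destruct E. intro H. f_equal. apply nat_tr_bot_ext. intros [i p]. apply (H (exist _ i p)).
Qed.

Lemma dual_dir_eq_rect (q : bicomod C D) (x y : pos (dual q)) (E : x = y) (e : dir (dual q) x) :
  eq_rect x (dir (dual q)) e y E =
  existT (fun j : fib q (projT1 y) => unit)
    (exist _ (proj1_sig (projT1 e)) (eq_trans (proj2_sig (projT1 e)) (f_equal (@projT1 _ _) E)))
    (projT2 e).
Proof.
destruct E. destruct e as [[j pj] u]. reflexivity.
Qed.

Lemma hom_eq_into_dual (m q : bicomod C D) (f g : hom m (dual q))
  (E : forall i, projT1 (on_pos f i) = projT1 (on_pos g i)) :
  (forall i, on_pos f i = on_pos g i) ->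
  (forall i (e : {j : fib q (projT1 (on_pos f i)) & unit}),
      on_dir f i e = on_dir g i (existT (fun j : fib q (projT1 (on_pos g i)) => unit)
          (exist _ (proj1_sig (projT1 e)) (eq_trans (proj2_sig (projT1 e)) (E i))) (projT2 e))) ->
  hom_eq f g.
Proof.
intros P H. exists P. intros i e. rewrite dual_dir_eq_rect, H.
repeat f_equal. apply proof_irrelevance.
Qed.

Lemma fib_unique_of_conjunctive (m : bicomod C D) : conjunctive m ->
  forall a (j j' : fib m a), j = j'.
Proof.
intros Hc a j j'. apply sig_eq_proj1. destruct (Hc a) as [i [_ Hu]].
rewrite (Hu _ (proj2_sig j)), (Hu _ (proj2_sig j')). reflexivity.
Qed.

Lemma dual_linear_of_conjunctive (m : bicomod C D) : conjunctive m -> linear (dual m).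
Proof.
intros Hc [a phi]. destruct (Hc a) as [i [Hi _]].
exists (existT (fun j : fib m a => unit) (exist _ i Hi) tt).
intros [j []]. f_equal. apply (fib_unique_of_conjunctive Hc).
Qed.

Lemma dual_conjunctive_of_linear (m : bicomod C D) : linear m -> conjunctive (dual m).
Proof.
intros Hl a.
pose (F := fun j : fib m a =>
  proj1_sig (constructive_indefinite_description _ (Hl (proj1_sig j)))).
exists (existT (fun a => nat_tr m (bot C D) a) a (nat_tr_of_dirs F)). split; [reflexivity|].
intros [a' phi'] H. simpl in H. subst a'. f_equal. apply nat_tr_bot_ext. intro j.
apply (proj2_sig (constructive_indefinite_description _ (Hl (proj1_sig j)))).
Qed.

Lemma dualmap_id (m : bicomod C D) : hom_eq (dualmap (idh m)) (idh (dual m)).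
Proof.
apply (@hom_eq_into_dual _ m (dualmap (idh m)) (idh (dual m)) (fun i => eq_refl)).
- intros [a phi]. apply (dual_pos_eq eq_refl). intros [i pi]. cbn.
  apply (nat_tr_dir_irrel phi i).
- intros [a phi] [[i pi] u]. cbn. repeat f_equal. apply proof_irrelevance.
Qed.

Lemma dualmap_comp (m n p : bicomod C D) (f : hom m n) (g : hom n p) :
  hom_eq (dualmap (comp g f)) (comp (dualmap f) (dualmap g)).
Proof.
apply (@hom_eq_into_dual _ m (dualmap (comp g f)) (comp (dualmap f) (dualmap g))
  (fun i => eq_refl)).
- intros [a phi]. apply (dual_pos_eq eq_refl). intros [i pi]. cbn.
  do 2 f_equal. apply (nat_tr_dir_irrel phi).
- intros [a phi] [[i pi] u]. cbn. repeat f_equal. apply proof_irrelevance.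
Qed.

Lemma dual_pos_eq_of_conjunctive (m : bicomod C D) (Hc : conjunctive m)
  (a a' : C) (E : a = a') (phi : nat_tr m (bot C D) a) (phi' : nat_tr m (bot C D) a')
  (j : fib m a) (j' : fib m a') (Ej : proj1_sig j = proj1_sig j') :
  nat_tr_dir phi' j' = eq_rect _ (dir m) (nat_tr_dir phi j) _ Ej ->
  existT (fun a => nat_tr m (bot C D) a) a phi = existT _ a' phi'.
Proof.
destruct E. intro H. f_equal. apply nat_tr_bot_ext. intro k.
pose proof (fib_unique_of_conjunctive Hc j j') as <-.
rewrite (fib_unique_of_conjunctive Hc k j), H, (proof_irrelevance _ Ej eq_refl). reflexivity.
Qed.

Lemma fib_dual_unique_of_linear (m : bicomod C D) : linear m ->
  forall a (J J' : fib (dual m) a), J = J'.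
Proof.
intros Hl a [[a1 phi1] p1] [[a2 phi2] p2]. simpl in p1, p2. subst.
assert (phi1 = phi2) as ->.
{ apply nat_tr_bot_ext. intro j. destruct (Hl (proj1_sig j)) as [e He].
  rewrite (He (nat_tr_dir phi1 j)), (He (nat_tr_dir phi2 j)). reflexivity. }
reflexivity.
Qed.

Definition dual_fib_of_dirs (m : bicomod C D) (a : C)
  (F : forall j : fib m a, dir m (proj1_sig j)) : fib (dual m) a :=
  exist (fun P => projT1 P = a)
    (existT (fun a => nat_tr m (bot C D) a) a (nat_tr_of_dirs F)) eq_refl.

Definition ddual_unit_pos (m : bicomod C D) (i : pos m) : pos (dual (dual m)) :=
  existT (fun a => nat_tr (dual m) (bot C D) a) (base m i)
    (nat_tr_of_dirs (fun J : fib (dual m) (base m i) =>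
       existT (fun j : fib m (projT1 (proj1_sig J)) => unit)
         (exist _ i (eq_sym (proj2_sig J))) tt)).

Definition ddual_unit (m : bicomod C D) : hom m (dual (dual m)).
Proof.
refine (@Hom _ _ m (dual (dual m)) (ddual_unit_pos m) (fun i => eq_refl)
  (fun i e => nat_tr_dir (projT2 (proj1_sig (projT1 e)))
                (exist _ i (eq_sym (proj2_sig (projT1 e))))) _).
intros i e. rewrite !dlab_dual. reflexivity.
Defined.

Lemma ddual_unit_natural (m n : bicomod C D) (f : hom m n) :
  hom_eq (comp (dualmap (dualmap f)) (ddual_unit m)) (comp (ddual_unit n) f).
Proof.
apply (@hom_eq_into_dual m (dual n) (comp (dualmap (dualmap f)) (ddual_unit m))
  (comp (ddual_unit n) f) (fun i => eq_sym (on_base f i))).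
- intro i. apply (dual_pos_eq (eq_sym (on_base f i))).
  intros [J pJ]. cbn. f_equal. apply sig_eq_proj1. reflexivity.
- intros i [[J pJ] u]. cbn. f_equal. apply (nat_tr_dir_irrel (projT2 J)).
Qed.

Definition ddual_select (m : bicomod C D) (a : C) (Phi : nat_tr (dual m) (bot C D) a)
  (F : forall j : fib m a, dir m (proj1_sig j)) : fib m a :=
  projT1 (nat_tr_dir Phi (dual_fib_of_dirs F)).

Definition counit_index (m : bicomod C D) (P : pos (dual (dual m))) : fib m (projT1 P) :=
  proj1_sig (constructive_indefinite_description _
    (selection_good_index (fun j : fib m (projT1 P) => dir m (proj1_sig j))
       (ddual_select (projT2 P)))).

Lemma counit_index_good (m : bicomod C D) (P : pos (dual (dual m)))
  (e : dir m (proj1_sig (counit_index P))) :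
  exists F : forall j : fib m (projT1 P), dir m (proj1_sig j),
    F (counit_index P) = e /\ ddual_select (projT2 P) F = counit_index P.
Proof.
exact (proj2_sig (constructive_indefinite_description _
    (selection_good_index (fun j : fib m (projT1 P) => dir m (proj1_sig j))
       (ddual_select (projT2 P)))) e).
Qed.

Definition counit_witness (m : bicomod C D) (P : pos (dual (dual m)))
  (e : dir m (proj1_sig (counit_index P))) :
  forall j : fib m (projT1 P), dir m (proj1_sig j) :=
  proj1_sig (constructive_indefinite_description _ (counit_index_good P e)).

Lemma counit_witness_at_index (m : bicomod C D) (P : pos (dual (dual m)))
  (e : dir m (proj1_sig (counit_index P))) : counit_witness P e (counit_index P) = e.
Proof.
exact (proj1 (proj2_sig (constructive_indefinite_description _ (counit_index_good P e)))).
Qed.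

Lemma select_counit_witness (m : bicomod C D) (P : pos (dual (dual m)))
  (e : dir m (proj1_sig (counit_index P))) :
  ddual_select (projT2 P) (counit_witness P e) = counit_index P.
Proof.
exact (proj2 (proj2_sig (constructive_indefinite_description _ (counit_index_good P e)))).
Qed.

Definition ddual_counit (m : bicomod C D) : hom (dual (dual m)) m.
Proof.
refine (@Hom _ _ (dual (dual m)) m (fun P => proj1_sig (counit_index P))
  (fun P => proj2_sig (counit_index P))
  (fun P e => existT (fun J : fib (dual m) (projT1 P) => unit)
                (dual_fib_of_dirs (counit_witness P e)) tt) _).
intros P e. rewrite !dlab_dual.
change (dlab m (proj1_sig (ddual_select (projT2 P) (counit_witness P e)))
  (counit_witness P e (ddual_select (projT2 P) (counit_witness P e)))
  = dlab m (proj1_sig (counit_index P)) e).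
rewrite (select_counit_witness P e), (counit_witness_at_index P). reflexivity.
Defined.

Lemma counit_index_of_unit (m : bicomod C D) (Hcl : conjunctive m \/ linear m) (i : pos m) :
  proj1_sig (counit_index (ddual_unit_pos m i)) = i.
Proof.
destruct Hcl as [Hc | Hl].
- rewrite (fib_unique_of_conjunctive Hc (counit_index (ddual_unit_pos m i))
    (exist _ i eq_refl)). reflexivity.
- destruct (Hl (proj1_sig (counit_index (ddual_unit_pos m i)))) as [e _].
  rewrite <- (select_counit_witness (ddual_unit_pos m i) e). reflexivity.
Qed.

Lemma ddual_counit_unit (m : bicomod C D) (Hcl : conjunctive m \/ linear m) :
  hom_eq (comp (ddual_counit m) (ddual_unit m)) (idh m).
Proof.
exists (counit_index_of_unit Hcl). intros i e. simpl.
rewrite (nat_tr_dir_transport _ (counit_index (ddual_unit_pos m i)) (exist _ i eq_refl)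
  (counit_index_of_unit Hcl i)).
rewrite nat_tr_dir_of_dirs, counit_witness_at_index. reflexivity.
Qed.

Lemma fib_unit_eq (m : bicomod C D) (a : C) (x y : {j : fib m a & unit}) :
  proj1_sig (projT1 x) = proj1_sig (projT1 y) -> x = y.
Proof.
destruct x as [j []], y as [j' []]. simpl. intro E. rewrite (sig_eq_proj1 j j' E). reflexivity.
Qed.

Lemma ddual_pos_constant (m : bicomod C D) (Hcl : conjunctive m \/ linear m) (a : C)
  (Phi : nat_tr (dual m) (bot C D) a) (J : fib (dual m) a) :
  proj1_sig (projT1 (nat_tr_dir Phi J)) = proj1_sig (counit_index (existT _ a Phi)).
Proof.
destruct Hcl as [Hc | Hl].
- destruct (Hc a) as [i [_ Hu]].
  rewrite (Hu _ (proj2_sig (counit_index (existT _ a Phi)))). apply Hu.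
  exact (eq_trans (proj2_sig (projT1 (nat_tr_dir Phi J))) (proj2_sig J)).
- destruct (Hl (proj1_sig (counit_index (existT _ a Phi)))) as [e _].
  rewrite <- (select_counit_witness (existT _ a Phi) e). unfold ddual_select.
  rewrite (fib_dual_unique_of_linear Hl J (dual_fib_of_dirs (counit_witness (existT _ a Phi) e))).
  reflexivity.
Qed.

Lemma ddual_unit_counit (m : bicomod C D) (Hcl : conjunctive m \/ linear m) :
  hom_eq (comp (ddual_unit m) (ddual_counit m)) (idh (dual (dual m))).
Proof.
apply (@hom_eq_into_dual (dual (dual m)) (dual m) (comp (ddual_unit m) (ddual_counit m)) (idh _)
   (fun P => proj2_sig (counit_index P))).
- intros [a Phi]. apply (dual_pos_eq (proj2_sig (counit_index (existT _ a Phi)))).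
  intros J. apply fib_unit_eq. cbn. rewrite (ddual_pos_constant Hcl). reflexivity.
- intros P [J []]. cbn. f_equal.
  destruct Hcl as [Hc | Hl]; [| apply (fib_dual_unique_of_linear Hl)].
  apply sig_eq_proj1. destruct J as [[a' phi] pJ]. simpl in *.
  apply (@dual_pos_eq_of_conjunctive m Hc _ _ (eq_sym (eq_trans pJ (proj2_sig (counit_index P))))
    _ _ (counit_index P) (exist _ (proj1_sig (counit_index P)) (eq_sym pJ)) eq_refl).
  rewrite nat_tr_dir_of_dirs, counit_witness_at_index. reflexivity.
Qed.

Section Spans.
Variables (M : Type) (s : M -> C) (t : M -> D).

Definition dual_lin_to_conj : hom (dual (lin_of s t)) (conj_of s t).
Proof.
refine (@Hom _ _ (dual (lin_of s t)) (conj_of s t) (fun p => projT1 p) (fun p => eq_refl)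
  (fun p x => existT (fun j : fib (lin_of s t) (projT1 p) => unit) x tt) _).
intros p x. rewrite dlab_dual. reflexivity.
Defined.

Definition conj_to_dual_lin : hom (conj_of s t) (dual (lin_of s t)).
Proof.
refine (@Hom _ _ (conj_of s t) (dual (lin_of s t))
  (fun a => existT (fun a => nat_tr (lin_of s t) (bot C D) a) a
              (nat_tr_of_dirs (fun _ : fib (lin_of s t) a => tt)))
  (fun a => eq_refl) (fun a e => projT1 e) _).
intros a e. rewrite dlab_dual. reflexivity.
Defined.

Lemma dual_lin_iso_conj : iso (dual (lin_of s t)) (conj_of s t).
Proof.
exists dual_lin_to_conj, conj_to_dual_lin. split.
- apply (@hom_eq_into_dual _ (lin_of s t) (comp conj_to_dual_lin dual_lin_to_conj) (idh _)
    (fun i => eq_refl)).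
  + intros [a phi]. apply (dual_pos_eq eq_refl). intro j.
    cbn. destruct (nat_tr_dir phi j). reflexivity.
  + intros [a phi] [[x px] []]. reflexivity.
- exists (fun a => eq_refl). intros a e. reflexivity.
Qed.

Definition conj_fib_self (a : C) : fib (conj_of s t) a := exist (fun c : C => c = a) a eq_refl.

Definition dual_conj_to_lin : hom (dual (conj_of s t)) (lin_of s t).
Proof.
refine (@Hom _ _ (dual (conj_of s t)) (lin_of s t)
  (fun p => proj1_sig (nat_tr_dir (projT2 p) (conj_fib_self (projT1 p))))
  (fun p => proj2_sig (nat_tr_dir (projT2 p) (conj_fib_self (projT1 p))))
  (fun p u => existT (fun j : fib (conj_of s t) (projT1 p) => unit)
                (conj_fib_self (projT1 p)) tt) _).
intros p u. rewrite dlab_dual. reflexivity.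
Defined.

Definition lin_to_dual_conj : hom (lin_of s t) (dual (conj_of s t)).
Proof.
refine (@Hom _ _ (lin_of s t) (dual (conj_of s t))
  (fun x => existT (fun a => nat_tr (conj_of s t) (bot C D) a) (s x)
     (nat_tr_of_dirs (fun j : fib (conj_of s t) (s x) =>
        exist (fun y => s y = proj1_sig j) x (eq_sym (proj2_sig j)))))
  (fun x => eq_refl) (fun x e => tt) _).
intros x e. rewrite dlab_dual. reflexivity.
Defined.

Lemma dual_conj_iso_lin : iso (dual (conj_of s t)) (lin_of s t).
Proof.
exists dual_conj_to_lin, lin_to_dual_conj. split.
- apply (@hom_eq_into_dual _ (conj_of s t) (comp lin_to_dual_conj dual_conj_to_lin) (idh _)
    (fun p => proj2_sig (nat_tr_dir (projT2 p) (conj_fib_self (projT1 p))))).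
  + intros [a phi]. apply (dual_pos_eq (proj2_sig (nat_tr_dir phi (conj_fib_self a)))).
    intros [c pc]. simpl in pc. subst c. apply sig_eq_proj1. reflexivity.
  + intros [a phi] [[c pc] []]. cbn. f_equal. apply sig_eq_proj1.
    exact (eq_sym (eq_trans pc (proj2_sig (nat_tr_dir phi (conj_fib_self a))))).
- exists (fun x => eq_refl). intros x []. reflexivity.
Qed.

End Spans.

End Duality.

Theorem theorem2p50 (C D : Type) :
  (forall m : bicomod C D, conjunctive m -> linear (dual m)) /\
  (forall m : bicomod C D, linear m -> conjunctive (dual m)) /\
  (forall m : bicomod C D, hom_eq (dualmap (idh m)) (idh (dual m))) /\
  (forall (m n p : bicomod C D) (f : hom m n) (g : hom n p),
      hom_eq (dualmap (comp g f)) (comp (dualmap f) (dualmap g))) /\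
  (exists (eta : forall m : bicomod C D, hom m (dual (dual m)))
          (eps : forall m : bicomod C D, hom (dual (dual m)) m),
      (forall m : bicomod C D, conjunctive m \/ linear m ->
          hom_eq (comp (eps m) (eta m)) (idh m) /\
          hom_eq (comp (eta m) (eps m)) (idh (dual (dual m)))) /\
      (forall (m n : bicomod C D) (f : hom m n),
          (conjunctive m /\ conjunctive n) \/ (linear m /\ linear n) ->
          hom_eq (comp (dualmap (dualmap f)) (eta m)) (comp (eta n) f))) /\
  (forall (M : Type) (s : M -> C) (t : M -> D),
      iso (dual (lin_of s t)) (conj_of s t) /\
      iso (dual (conj_of s t)) (lin_of s t)).
Proof.
split; [exact (@dual_linear_of_conjunctive C D)|].
split; [exact (@dual_conjunctive_of_linear C D)|].
split; [exact (@dualmap_id C D)|].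
split; [exact (@dualmap_comp C D)|].
split.
- exists (@ddual_unit C D), (@ddual_counit C D). split.
  + intros m Hcl. split; [exact (ddual_counit_unit Hcl) | exact (ddual_unit_counit Hcl)].
  + intros m n f _. apply ddual_unit_natural.
- intros M s t. split; [apply dual_lin_iso_conj | apply dual_conj_iso_lin].
Qed.
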